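(* The algorithm BudgetFPT described in the context, run on an instance with budget $b$, $s$ entry nodes, maximum attack path length $l$ and $n$ nodes, has running time \[O\left(l^b \binom{b+s-1}{b} n\right).\]
   Context: An instance consists of a directed graph $G=(V,E)$ with $n=|V|$ nodes, a destination node $\mathrm{DA}$, $s$ entry nodes (uniformly likely), a set of blockable edges $E_b\subseteq E$, and a budget $b$. For a set $B\subseteq E_b$ of blocked edges, $|SP(s_i,G-B)|$ is the number of edges of a shortest path from entry node $s_i$ to $\mathrm{DA}$ in $G-B$ ($+\infty$ if none), and $f$ is a fixed decreasing function with $f(+\infty)=0$; the goal is to minimize $\frac1s\sum_i f(|SP(s_i,G-B)|)$ over $B\subseteq E_b$, $|B|\le b$. The maximum attack path length $l$ is the maximum number of edges of a path to $\mathrm{DA}$ in $G$. As a standing assumption, graphs are tree-like with $m=|E|=O(n)$. Algorithm BudgetFPT$(G,b)$: if $b=0$, compute by breadth-first search from $\mathrm{DA}$ the distances of all remaining entry nodes to $\mathrm{DA}$ and return $\sum_i f(\mathrm{dist}(s_i))/s$; if no entry nodes remain, return $0$. Otherwise pick an arbitrary remaining entry node $s_1$ and an arbitrary shortest path $p$ from $s_1$ to $\mathrm{DA}$. Record the value BudgetFPT$(G',b)+f(\mathrm{dist}(s_1))/s$, where $G'$ is $G$ with $s_1$ no longer treated as an entry node; and for every blockable edge $e$ on $p$, record BudgetFPT$(G-e,b-1)$. Return the minimum recorded value. *)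

From HB Require Import structures.
From mathcomp Require Import all_boot all_order all_algebra.
Set Implicit Arguments. Unset Strict Implicit. Unset Printing Implicit Defensive.
Import Order.TTheory GRing.Theory Num.Theory.

(* A directed graph on the finite node type V is given by its edge set
   E : {set V * V}; (x, y) \in E is the edge x -> y.  n = #|V|, m = #|E|. *)

Section Graphs.
Variable V : finType.

Definition edge_rel (E B : {set V * V}) : rel V :=
  fun x y => ((x, y) \in E) && ((x, y) \notin B).

Fixpoint walk_le (r : rel V) (k : nat) (x y : V) : bool :=
  if k is k'.+1 then (x == y) || [exists z, r x z && walk_le r k' z y]
  else x == y.

(* Shortest-path distance (number of edges) from x to y; None = +infinity.
   A shortest walk is a simple path, so it has fewer than #|V| edges. *)
Definition dist (r : rel V) (x y : V) : option nat :=
  ohead [seq k <- iota 0 #|V| | walk_le r k x y].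

Definition shortest_path (r : rel V) (x y : V) (p : seq V) : bool :=
  [&& path r x p, last x p == y & dist r x y == Some (size p)].

Definition path_edges (x : V) (p : seq V) : seq (V * V) := zip (x :: p) p.

Definition max_attack_len (E : {set V * V}) (DA : V) (l : nat) : Prop :=
  (exists x p, [/\ path (edge_rel E set0) x p, uniq (x :: p),
                   last x p = DA & size p = l]) /\
  (forall x p, path (edge_rel E set0) x p -> uniq (x :: p) -> last x p = DA ->
               size p <= l).

(* Cost model: every call that runs a breadth-first search (the b = 0 leaves,
   and every branching call, which computes dist(s1) and a shortest path p
   by BFS, then iterates over the edges of p) costs n + m + 1 elementary
   steps; a call returning 0 because no entry nodes remain costs 1.
   The "arbitrary" choices are made by the strategies
     pickE B S     : index (mod |S|) of the chosen entry node s1 in S,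
     pickP B S s1  : the chosen shortest path from s1 to DA in G - B,
   which may depend on the whole current state (B = blocked edges,
   S = remaining entry nodes).  s = original number of entry nodes.
   The argument k is fuel, always equal to b + size S (each recursive call
   decreases b + size S by exactly one), so the k = 0 branch is never hit
   when called from budget_fpt_run. *)
Section Algo.
Variables (R : realFieldType) (E Eb : {set V * V}) (DA : V) (s : nat)
  (f : nat -> R) (pickE : {set V * V} -> seq V -> nat)
  (pickP : {set V * V} -> seq V -> V -> seq V).

Definition fval (d : option nat) : R := if d is Some k then f k else 0%R.

Definition call_cost : nat := #|V| + #|E| + 1.

Fixpoint budget_fpt (k b : nat) (S : seq V) (B : {set V * V}) : R * nat :=
  let r := edge_rel E B in
  if b == 0 then
    ((\sum_(x <- S) fval (dist r x DA)) / s%:R, call_cost)%R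
  else match S with
  | [::] => (0%R, 1)
  | _ :: _ =>
    match k with
    | 0 => (0%R, 0)
    | k'.+1 =>
      let i := pickE B S %% size S in
      let s1 := nth DA S i in
      let S' := take i S ++ drop i.+1 S in
      let d := dist r s1 DA in
      let p := if d is Some _ then pickP B S s1 else [::] in
      let r0 := budget_fpt k' b S' B in
      let rs := [seq budget_fpt k' b.-1 S (e |: B)
                | e <- path_edges s1 p & e \in Eb] in
      (foldr (fun x m => Num.min x.1 m) (r0.1 + fval d / s%:R)%R rs,
       call_cost + r0.2 + sumn (map snd rs))
    end
  end.

End Algo.

Definition budget_fpt_run (R : realFieldType) (E Eb : {set V * V}) (DA : V)
  (f : nat -> R) (pickE : {set V * V} -> seq V -> nat)
  (pickP : {set V * V} -> seq V -> V -> seq V) (b : nat) (entries : seq V)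
  : R * nat :=
  budget_fpt E Eb DA (size entries) f pickE pickP (b + size entries) b entries set0.

End Graphs.

From HB Require Import structures.
From mathcomp Require Import all_boot all_order all_algebra.
From mathcomp Require Import zify.
Import Order.TTheory GRing.Theory Num.Theory.
Set Implicit Arguments. Unset Strict Implicit.

(* Every call of BudgetFPT does one breadth-first search, of cost
   a = n + m + 1, and for b > 0 recurses once with one entry node fewer and
   at most l times (the blockable edges of a shortest path, which has at most
   l edges) with budget b - 1.  Pascal's rule
   l^(b+1) C(b+s, b+1) = l^(b+1) C(b+s-1, b+1) + l * l^b C(b+s-1, b)
   then bounds the cost by 3(a+1) l^b C(b+s-1, b), the invariant keeping a
   slack of a+1 per call.  When l = 1 and only one entry node remains this
   slack is too small, but then blocking the single edge of the path
   disconnects that node, which never branches again: the invariant grants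
   an extra a+1 whenever some entry node is unreachable. *)

Lemma ohead_filter_iota_min (P : pred nat) m n d :
  ohead [seq k <- iota m n | P k] = Some d -> forall k, m <= k < d -> ~~ P k.
Proof.
elim: n m => [|n IHn] m //=.
case Pm: (P m) => /=; first by move=> [<-] k; lia.
move=> Hd k; case: (eqVneq k m) => [-> _|k_neq_m /andP[m_le_k k_lt_d]].
  by rewrite Pm.
by apply: (IHn m.+1 Hd); lia.
Qed.

Lemma sumn_map_le (T : eqType) (g : T -> nat) (s : seq T) c M :
  (forall x, x \in s -> g x + c <= M) -> sumn (map g s) + size s * c <= size s * M.
Proof.
elim: s => [|x s IHs] //= gM.
have gxM := gM x (mem_head _ _).
have := IHs (fun y ys => gM y (mem_behead (s := x :: s) ys)).
by rewrite !mulSn; lia.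
Qed.

Section ShortestPaths.
Variable V : finType.

Lemma walk_le_path (r : rel V) x p k :
  path r x p -> size p <= k -> walk_le r k x (last x p).
Proof.
elim: p x k => [|z p IHp] x [|k] //=; rewrite ?eqxx // => /andP[rxz pz] pk.
by apply/orP; right; apply/existsP; exists z; rewrite rxz IHp.
Qed.

Lemma dist_min (r : rel V) x y d k :
  dist r x y = Some d -> k < d -> ~~ walk_le r k x y.
Proof. by move=> dxy k_lt_d; exact: (ohead_filter_iota_min dxy). Qed.

Lemma edge_rel_subrel (E B B' : {set V * V}) :
  B \subset B' -> subrel (edge_rel E B') (edge_rel E B).
Proof.
move=> sBB' x y /andP[xyE xyB']; rewrite /edge_rel xyE /=.
by apply: contra xyB'; exact: (subsetP sBB').
Qed.

End ShortestPaths.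

Section BudgetFPTCost.
Variables (V : finType) (R : realFieldType) (E Eb : {set V * V}) (DA : V)
  (s : nat) (f : nat -> R) (pickE : {set V * V} -> seq V -> nat)
  (pickP : {set V * V} -> seq V -> V -> seq V) (l : nat).
Hypothesis max_len_simple_path : forall x p,
  path (edge_rel E set0) x p -> uniq (x :: p) -> last x p = DA -> size p <= l.
Hypothesis pickP_shortest : forall (B : {set V * V}) (S : seq V) (x : V) (d : nat),
  dist (edge_rel E B) x DA = Some d ->
  shortest_path (edge_rel E B) x DA (pickP B S x).
Hypothesis l_gt0 : 0 < l.

Local Notation cost k b S B := (budget_fpt E Eb DA s f pickE pickP k b S B).2.

Definition unreachable B x := dist (edge_rel E B) x DA == None.

Lemma shortest_path_size_le B x p :
  shortest_path (edge_rel E B) x DA p -> size p <= l.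
Proof.
case/and3P=> px /eqP; case: (shortenP px) => q pq uq _ lq /eqP dx.
have q_le_l : size q <= l.
  apply: max_len_simple_path uq lq; apply: sub_path pq.
  exact/edge_rel_subrel/sub0set.
rewrite leqNgt; apply/negP => l_lt_p.
have := dist_min dx (leq_ltn_trans q_le_l l_lt_p).
by rewrite -lq walk_le_path.
Qed.

(* With l = 1 a shortest path is the single edge x -> DA, and any later
   shortest path from x would have to be that same edge. *)
Lemma block_edge_unreachable B x p e : l = 1 ->
  shortest_path (edge_rel E B) x DA p -> e \in path_edges x p ->
  unreachable (e |: B) x.
Proof.
move=> l1 sp; have := shortest_path_size_le sp; rewrite l1.
case: p sp => [|y [|]] // /and3P[_ /= /eqP -> /eqP dx] _.
rewrite inE => /eqP ->; rewrite /unreachable.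
case dx': (dist _ x DA) => [d|] //.
have := shortest_path_size_le (pickP_shortest [::] dx'); rewrite l1.
case: (pickP _ _ _) (pickP_shortest [::] dx') => [|z [|]] // /and3P[/= pz /eqP lz _] _.
  by have := dist_min dx (ltn0Sn 0); rewrite /= lz eqxx.
by move: pz; rewrite lz andbT /edge_rel setU11 andbF.
Qed.

Definition chosen_index B S := pickE B S %% size S.
Definition chosen_entry B S := nth DA S (chosen_index B S).
Definition other_entries B S :=
  take (chosen_index B S) S ++ drop (chosen_index B S).+1 S.
Definition branch_edges B S :=
  let x := chosen_entry B S in
  let p := if dist (edge_rel E B) x DA is Some _ then pickP B S x else [::] in
  [seq e <- path_edges x p | e \in Eb].

Lemma cost_budget0 k S B : cost k 0 S B = call_cost E.
Proof. by case: k. Qed.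

Lemma cost_nil k b B : cost k b.+1 [::] B = 1.
Proof. by case: k. Qed.

Lemma cost_step k b S B : 0 < size S ->
  cost k.+1 b.+1 S B = call_cost E + cost k b.+1 (other_entries B S) B
                       + sumn [seq cost k b S (e |: B) | e <- branch_edges B S].
Proof. by case: S => // x S _; rewrite /= -map_comp. Qed.

Section ChosenEntry.
Variables (B : {set V * V}) (S : seq V).
Hypothesis S_gt0 : 0 < size S.

Let chosen_index_lt : chosen_index B S < size S.
Proof. exact: ltn_pmod. Qed.

Lemma chosen_entry_in : chosen_entry B S \in S.
Proof. exact: mem_nth. Qed.

Lemma size_other_entries : size (other_entries B S) = (size S).-1.
Proof.
by rewrite size_cat size_take size_drop chosen_index_lt; lia.
Qed.

Lemma has_unreachable_split :
  has (unreachable B) S =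
  unreachable B (chosen_entry B S) || has (unreachable B) (other_entries B S).
Proof.
rewrite -{1}(cat_take_drop (chosen_index B S) S).
by rewrite (drop_nth DA chosen_index_lt) !has_cat /= orbCA.
Qed.

Lemma branch_edges_unreachable :
  unreachable B (chosen_entry B S) -> branch_edges B S = [::].
Proof. by rewrite /unreachable /branch_edges => /eqP ->. Qed.

Lemma size_branch_edges : size (branch_edges B S) <= l.
Proof.
rewrite /branch_edges; case dx: (dist _ _ _) => [d|] //.
rewrite size_filter (leq_trans (count_size _ _)) //.
rewrite size_zip /= minnE subKn //.
exact: shortest_path_size_le (pickP_shortest S dx).
Qed.

Lemma branch_edges_block_unreachable e : l = 1 ->
  e \in branch_edges B S -> unreachable (e |: B) (chosen_entry B S).
Proof.
rewrite /branch_edges; case dx: (dist _ _ _) => [d|] // l1.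
rewrite mem_filter => /andP[_]; apply: block_edge_unreachable l1 _.
exact: pickP_shortest dx.
Qed.

End ChosenEntry.

Definition cost_bound K b n := K * l ^ b * 'C(b + n - 1, b).

Lemma cost_bound_pascal K b n :
  cost_bound K b.+1 n.+1 = cost_bound K b.+1 n + l * cost_bound K b n.+1.
Proof.
rewrite /cost_bound.
have -> : b.+1 + n.+1 - 1 = (b + n).+1 by lia.
have -> : b.+1 + n - 1 = b + n by lia.
have -> : b + n.+1 - 1 = b + n by lia.
by rewrite binS expnS; lia.
Qed.

Lemma cost_bound_ge K b n : 0 < n -> K <= cost_bound K b n.
Proof.
move=> n_gt0; rewrite /cost_bound -mulnA leq_pmulr // muln_gt0 expn_gt0 l_gt0.
by rewrite bin_gt0; lia.
Qed.

(* One step of the induction: T1, M1 are the cost and bound of the call on the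
   remaining entry nodes, T2 the total cost of the j branching calls, each
   bounded by M2, and u1 (resp. u') says that the chosen entry node (resp.
   some remaining one) is unreachable. *)
Lemma cost_recurrence_step (a j T1 T2 M1 M2 : nat) (u1 u' : bool) :
  j <= l -> 3 * a.+1 <= M2 -> (u1 -> j = 0) ->
  T2 + j * (a.+1 * (1 + (l == 1))) <= j * M2 ->
  T1 + a.+1 * (1 + u') <= M1 \/ [/\ T1 = 1, M1 = 0 & u' = false] ->
  a + T1 + T2 + a.+1 * (1 + (u1 || u')) <= M1 + l * M2.
Proof.
move=> j_le_l M2_ge u1j T2_le T1_le.
have M2_le : M2 <= l * M2 by rewrite leq_pmull.
case: u1 u1j => [/(_ isT) j0 | _].
  by move: T2_le; rewrite j0; case: T1_le => [|[-> -> ->]]; case: u'; lia.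
have [j_lt_l|j_eq_l] : j < l \/ j = l by lia.
  have : j.+1 * M2 <= l * M2 by exact: leq_mul.
  by case: T1_le => [|[-> -> ->]]; case: u'; nia.
subst j; case: (l =P 1) T2_le => [-> | /eqP l_neq1].
  by case: T1_le => [|[-> -> ->]]; case: u'; nia.
have : 2 * a.+1 <= l * a.+1 by apply: leq_mul => //; lia.
by case: T1_le => [|[-> -> ->]]; case: u'; nia.
Qed.

Local Notation a := (call_cost E).

Lemma cost_le_bound k b S B : 0 < size S ->
  cost k b S B + a.+1 * (1 + has (unreachable B) S)
    <= cost_bound (3 * a.+1) b (size S).
Proof.
elim: k b S B => [|k IHk] [|b] S B S_gt0.
- by rewrite cost_budget0 /cost_bound bin0 muln1; case: (has _ _); lia.
- case: S S_gt0 => // x S _.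
  by apply: leq_trans (cost_bound_ge _ _ _); rewrite //=; case: (has _ _); lia.
- by rewrite cost_budget0 /cost_bound bin0 muln1; case: (has _ _); lia.
rewrite cost_step // has_unreachable_split //.
have size_S : size S = (size (other_entries B S)).+1.
  by rewrite size_other_entries //; lia.
rewrite size_S cost_bound_pascal -size_S.
apply: cost_recurrence_step.
- exact: size_branch_edges.
- exact: cost_bound_ge.
- by move/branch_edges_unreachable->.
- apply: sumn_map_le => e e_br; apply: leq_trans (IHk b S (e |: B) S_gt0).
  case: (l =P 1) => [l1|_]; last by rewrite addn0 muln1 leq_add2l leq_pmulr.
  have -> // : has (unreachable (e |: B)) S.
  by apply/hasP; exists (chosen_entry B S);
     [exact: chosen_entry_in | exact: branch_edges_block_unreachable].
- case: (other_entries B S) => [|y S']; last by left; exact: IHk.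
  by right; split; rewrite ?cost_nil // /cost_bound addn0 subn1 bin_small ?muln0.
Qed.

End BudgetFPTCost.

Theorem proposition1 (R : realFieldType) (c : nat) :
  exists C : nat,
  forall (V : finType) (E Eb : {set V * V}) (DA : V) (entries : seq V)
    (b l : nat) (f : nat -> R)
    (pickE : {set V * V} -> seq V -> nat)
    (pickP : {set V * V} -> seq V -> V -> seq V),
    Eb \subset E ->
    uniq entries ->
    #|E| <= c * #|V| ->
    (forall x y : nat, x <= y -> (f y <= f x)%R) ->
    (forall x : nat, (0 <= f x)%R) ->
    max_attack_len E DA l ->
    (forall (B : {set V * V}) (S : seq V) (x : V) (d : nat),
        dist (edge_rel E B) x DA = Some d ->
        shortest_path (edge_rel E B) x DA (pickP B S x)) ->
    1 <= l ->
    1 <= size entries ->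
    (budget_fpt_run E Eb DA f pickE pickP b entries).2
      <= C * l ^ b * 'C(b + size entries - 1, b) * #|V|.
Proof.
exists (3 * c + 9) => V E Eb DA entries b l f pickE pickP _ _ E_le _ _
  [_ max_len] pickP_shortest l_gt0 entries_gt0.
have cost_le := cost_le_bound Eb (size entries) f pickE max_len pickP_shortest
  l_gt0 (b + size entries) b set0 entries_gt0.
have n_gt0 : 0 < #|V| by apply/card_gt0P; exists DA.
have K_le : 3 * (call_cost E).+1 <= (3 * c + 9) * #|V|.
  by rewrite /call_cost; nia.
apply: leq_trans (leq_trans (leq_addr _ _) cost_le) _.
rewrite /cost_bound [leqRHS]mulnAC [_ * l ^ b * #|V|]mulnAC.
by apply: leq_mul => //; apply: leq_mul.
Qed.
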